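(* Let $K\in\mathbb{N}$ and let $\mathcal{S}$ be a collection of subsets $S\subset[K]$, each containing exactly four elements, such that every index $j\in[K]$ is contained in at most two sets of $\mathcal{S}$. Then there exist subsets $T(S)\subset S$, one for each $S\in\mathcal{S}$, such that $|T(S)|\ge1$ for every $S\in\mathcal{S}$, the sets $T(S)$ are pairwise disjoint, and $|T(S)|=3$ for at least $|\mathcal{S}|/4$ of the sets $S\in\mathcal{S}$. *)

From mathcomp Require Import all_boot.
Set Implicit Arguments.
Unset Strict Implicit.
Unset Printing Implicit Defensive.

From mathcomp Require Import all_boot perm zify.

(* Regard the points as edges of a multigraph on the sets of [Sc]: a point joins
   the (at most two) sets containing it.  Every set has degree four, so, as for
   an Euler orientation, each set can be given two of its points, disjointly; the
   proof splits off a pair of points of one set and recurses.  Sets are then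
   upgraded greedily to three points by granting each one more of its points,
   possibly taken from the pair of another set, never from an upgraded set and
   never twice from the same set.  While fewer than a quarter of the sets are
   upgraded, the sets not yet touched by the process outnumber the upgraded ones
   more than twice, whereas an upgrade forbids at most four points; since a
   forbidden point lies in at most one untouched set and each untouched set has
   two points outside its pair, some untouched set can still be upgraded. *)

Set Implicit Arguments.
Unset Strict Implicit.
Unset Printing Implicit Defensive.

Lemma mem_card_le2 (T : finType) (A : {set T}) a b c :
  #|A| <= 2 -> a != b -> a \in A -> b \in A -> c \in A -> (c == a) || (c == b).
Proof.
move=> A2 ab aA bA cA; apply/negPn/negP; rewrite negb_or => /andP[ca cb].
have: 2 < #|A| by apply/card_gt2P; exists a, b, c; rewrite (eq_sym b) ca.
by rewrite ltnNge A2.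
Qed.

Lemma cardsD2 (T : finType) (A : {set T}) x y : x != y ->
  #|A| = (x \in A) + (y \in A) + #|A :\ x :\ y|.
Proof.
by move=> xy; rewrite (cardsD1 x A) (cardsD1 y (A :\ x)) !inE eq_sym xy addnA.
Qed.

Lemma ltn_sum_pointwise (J : finType) (m n : J -> nat) j :
  (forall i, m i <= n i) -> m j < n j -> \sum_i m i < \sum_i n i.
Proof.
move=> le_mn lt_mn; rewrite (bigD1 j) //= [X in _ < X](bigD1 j) //=.
by rewrite -addSn leq_add // leq_sum.
Qed.

Lemma leq_card_bigcup (J T : finType) (P : {pred J}) (F : J -> {set T}) :
  #|\bigcup_(i in P) F i| <= \sum_(i in P) #|F i|.
Proof.
elim/big_rec2: _ => [|i U n _ IH]; first by rewrite cards0.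
by apply: leq_trans (leq_card_setU _ _) _; rewrite leq_add2l.
Qed.

Lemma sum_card_disjoint (J T : finType) (P : {pred J}) (F : J -> {set T})
    (B : {set T}) :
  {in P &, forall i j, i != j -> [disjoint F i & F j]} ->
  {in P, forall i, F i \subset B} -> \sum_(i in P) #|F i| <= #|B|.
Proof.
move=> disjF subB; pose G i := if i \in P then F i else set0.
have disjG i j : i != j -> [disjoint G i & G j].
  rewrite -setI_eq0 /G => ij.
  by case: ifP => iP; case: ifP => jP; rewrite ?setI0 ?set0I // setI_eq0 disjF.
have := partition_disjoint_bigcup addn (fun=> 1) disjG.
rewrite sum1_card (eq_bigr (fun i => #|G i|)) => [/= eqG|i _]; last by rewrite sum1_card.
rewrite big_mkcond /= (eq_bigr (fun i => #|G i|)) => [|i _]; last first.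
  by rewrite /G; case: ifP; rewrite ?cards0.
rewrite -eqG; apply/subset_leq_card/bigcupsP => i _.
by rewrite /G; case: ifP => iP; rewrite ?sub0set ?subB.
Qed.

Section Assignment.
Variables X I : finType.
Implicit Types (F : I -> {set X}) (d : I -> nat) (f : X -> option I).

Definition owners F e := [set a | e \in F a].
Definition fibre f a := f @^-1: [set Some a].

(* [f e = Some a] gives [e] to [F a]; the subsets sought are the fibres of [f],
   disjoint by construction. *)
Definition assignment F d f :=
  (forall e a, f e = Some a -> e \in F a) /\ forall a, d a <= #|fibre f a|.

Lemma assignment0 F d : (forall a, d a = 0) -> assignment F d (fun=> None).
Proof. by move=> d0; split=> // a; rewrite d0. Qed.

Lemma assignment_sub F F' d f :
  (forall a, F' a \subset F a) -> assignment F' d f -> assignment F d f.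
Proof. by move=> sF [fF fd]; split=> // e a /fF; apply/subsetP. Qed.

Lemma assignment_None F d f e :
  assignment F d f -> (forall a, e \notin F a) -> f e = None.
Proof.
move=> [fF _] eF; case E: (f e) => [a|] //.
by move: (fF _ _ E); rewrite (negbTE (eF a)).
Qed.

Lemma card_fibre_set f x a b : f x = None ->
  #|fibre [eta f with x |-> Some a] b| = (b == a) + #|fibre f b|.
Proof.
move=> fx; have xf : x \notin fibre f b by rewrite !inE fx.
case: (eqVneq b a) => [<-|ba]; last first.
  apply: eq_card => e; rewrite !inE /=; case: (eqVneq e x) => [->|//].
  by rewrite fx (inj_eq Some_inj) eq_sym (negbTE ba).
have := cardsU1 x (fibre f b); rewrite xf => <-.
apply: eq_card => e; rewrite !inE /=.
by case: (eqVneq e x) => [->|]; rewrite ?eqxx.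
Qed.

Lemma assignment_set F d f x a : f x = None -> x \in F a ->
  assignment F (fun b => d b - (b == a)) f ->
  assignment F d [eta f with x |-> Some a].
Proof.
move=> fx xa [fF fd]; split=> [e b /=|b].
  by case: eqP => [-> [<-] | _ /fF].
by rewrite card_fibre_set //; have := fd b; lia.
Qed.

Lemma card_fibre_perm f (s : {perm X}) a : #|fibre (f \o s) a| = #|fibre f a|.
Proof.
rewrite -[RHS](card_preimset _ (@perm_inj _ s)).
by apply: eq_card => e; rewrite !inE.
Qed.

Lemma owners_le2_sub F F' e : (forall a, F' a \subset F a) ->
  #|owners F e| <= 2 -> #|owners F' e| <= 2.
Proof.
move=> sF; apply: leq_trans; apply: subset_leq_card.
by apply/subsetP => a; rewrite !inE; apply/subsetP.
Qed.

Section Reduction.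
Variables (F : I -> {set X}) (d : I -> nat).
Hypothesis owners_le2 : forall e, #|owners F e| <= 2.
Hypothesis budget : forall a, d a * 2 <= #|F a|.
Hypothesis IH : forall F' d', \sum_a #|F' a| < \sum_a #|F a| ->
  (forall e, #|owners F' e| <= 2) -> (forall a, d' a * 2 <= #|F' a|) ->
  exists f, assignment F' d' f.
Variables (j : I) (y : X).
Hypothesis yj : y \in F j.

Lemma assignment_private : (forall a, y \in F a -> a = j) ->
  exists f, assignment F d f.
Proof.
move=> yF; pose F' a := F a :\ y.
have yFa a : (y \in F a) = (a == j) by apply/idP/eqP => [/yF|->].
have [f fA] : exists f, assignment F' (fun a => d a - (a == j)) f.
  apply: IH => [|e|a].
  - apply: (@ltn_sum_pointwise _ _ _ j) => [a|]; first exact/subset_leq_card/subD1set.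
    by rewrite [X in _ < X](cardsD1 y) yj.
  - by apply: owners_le2_sub (owners_le2 e) => a; apply: subD1set.
  - have := budget a; rewrite /F' [#|F a|](cardsD1 y) yFa.
    by case: (a == j) => /=; lia.
exists [eta f with y |-> Some j]; apply: assignment_set => //.
  by apply: assignment_None fA _ => a; rewrite !inE eqxx.
by apply: assignment_sub fA => a; apply: subD1set.
Qed.

Variables (k : I) (x : X).
Hypotheses (kj : k != j) (yk : y \in F k) (xj : x \in F j) (xy : x != y).

Lemma mem_F_y a : (y \in F a) = (a == j) || (a == k).
Proof.
apply/idP/idP => [ya|/orP[]/eqP-> //].
by apply: (mem_card_le2 (owners_le2 y)); rewrite ?inE // eq_sym.
Qed.

Lemma assignment_pair : x \in F k -> exists f, assignment F d f.
Proof.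
move=> xk; pose F' a := F a :\ x :\ y.
have xFa a : (x \in F a) = (a == j) || (a == k).
  apply/idP/idP => [xa|/orP[]/eqP-> //].
  by apply: (mem_card_le2 (owners_le2 x)); rewrite ?inE // eq_sym.
have sF' a : F' a \subset F a := subset_trans (subD1set _ _) (subD1set _ _).
have [f fA] : exists f, assignment F' (fun a => d a - (a == k) - (a == j)) f.
  apply: IH => [|e|a].
  - apply: (@ltn_sum_pointwise _ _ _ j) => [a|]; first exact/subset_leq_card.
    by rewrite [X in _ < X](cardsD2 _ xy) xj yj.
  - exact: owners_le2_sub (owners_le2 e).
  - have := budget a; rewrite /F' (cardsD2 (F a) xy) xFa mem_F_y.
    by case: (eqVneq a j) => [->|_] /=; lia.
pose g := [eta f with x |-> Some j].
exists [eta g with y |-> Some k]; apply: assignment_set => //.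
  rewrite /= eq_sym (negbTE xy).
  by apply: assignment_None fA _ => a; rewrite !inE eqxx.
apply: (@assignment_sub _ (fun a => F a :\ y)) => [a|]; first exact: subD1set.
apply: assignment_set; last 2 first.
- by rewrite !inE xy.
- by apply: assignment_sub fA => a; apply: setSD; apply: subD1set.
by apply: assignment_None fA _ => a; rewrite !inE eqxx andbF.
Qed.

Section SplitOff.
Hypothesis xNk : x \notin F k.

(* A solution for the
   smaller family that gives [x] to [k] is fixed by giving [y] to [k] instead and
   [x] to [j]; any other solution is fixed by giving [y] to [j]. *)
Definition split_off a :=
  if a == j then F j :\ x :\ y else if a == k then x |: (F k :\ y) else F a.

Lemma split_offP e a : e \in split_off a -> e \in F a \/ e = x /\ a = k.
Proof.
rewrite /split_off; case: (eqVneq a j) => [->|_].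
  by rewrite !inE => /and3P[_ _ ->]; left.
case: (eqVneq a k) => [->|_]; last by left.
by rewrite !inE => /orP[/eqP->|/andP[_ ->]]; [right|left].
Qed.

Lemma y_notin_split_off a : y \notin split_off a.
Proof.
rewrite /split_off; case: (eqVneq a j) => [_|aj]; first by rewrite !inE eqxx.
case: (eqVneq a k) => [_|ak]; last by rewrite mem_F_y (negbTE aj) (negbTE ak).
by rewrite !inE eqxx eq_sym (negbTE xy).
Qed.

Lemma card_split_off a : #|split_off a| = #|F a| - (a == j) * 2.
Proof.
rewrite /split_off; case: (eqVneq a j) => [->|_] /=.
  by rewrite (cardsD2 (F j) xy) xj yj /=; lia.
rewrite subn0; case: (eqVneq a k) => [->|//].
by rewrite cardsU1 !inE (negbTE xNk) andbF (cardsD1 y (F k)) yk.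
Qed.

Lemma owners_split_off e : #|owners split_off e| <= 2.
Proof.
case: (eqVneq e x) => [->|ex]; last first.
  apply: leq_trans (owners_le2 e); apply: subset_leq_card; apply/subsetP => a.
  by rewrite !inE => /split_offP[// | [/eqP]]; rewrite (negbTE ex).
have sub : owners split_off x \subset k |: (owners F x :\ j).
  apply/subsetP => a; rewrite !inE => xa.
  case: (split_offP xa) => [xFa | [_ ->]]; last by rewrite eqxx.
  rewrite xFa andbT orbC; apply/orP; left; apply: contraTneq xa => ->.
  by rewrite /split_off eqxx !inE eqxx andbF.
apply: leq_trans (subset_leq_card sub) _; have := owners_le2 x.
by rewrite cardsU1 (cardsD1 j (owners F x)) !inE xj; lia.
Qed.

Lemma assignment_split_off : exists f, assignment F d f.
Proof.
have [f fA] : exists f, assignment split_off (fun a => d a - (a == j)) f.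
  apply: IH => [|e|a]; last 2 first.
  - exact: owners_split_off.
  - by have := budget a; rewrite card_split_off; case: (a == j) => /=; lia.
  apply: (@ltn_sum_pointwise _ _ _ j) => [a|]; rewrite card_split_off ?leq_subr //.
  by rewrite eqxx (cardsD2 (F j) xy) xj yj; lia.
have fy : f y = None := assignment_None fA y_notin_split_off.
have [fF fd] := fA.
case: (eqVneq (f x) (Some k)) => [fx|fxk].
  exists [eta f \o tperm x y with x |-> Some j].
  apply: assignment_set => //=; first by rewrite tpermL.
  split=> [e a /=|a]; last by rewrite card_fibre_perm.
  case: tpermP => [_|->|ex _ /fF/split_offP[// | [/ex []]]]; first by rewrite fy.
  by rewrite fx => -[<-].
exists [eta f with y |-> Some j]; apply: assignment_set => //.
split=> // e a ea; have [// | [ex ak]] := split_offP (fF _ _ ea).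
by move: fxk; rewrite -ex ea ak eqxx.
Qed.

End SplitOff.

End Reduction.

Lemma assignment_exists F d : (forall e, #|owners F e| <= 2) ->
  (forall a, d a * 2 <= #|F a|) -> exists f, assignment F d f.
Proof.
have [N] := ubnP (\sum_a #|F a|); elim: N => // N IH in F d *.
rewrite ltnS => sumF owF budF.
have {}IH F' d' (lt : \sum_a #|F' a| < \sum_a #|F a|) := IH F' d' (leq_trans lt sumF).
case: (pickP (fun a => 0 < d a)) => [j dj | d0]; last first.
  by exists (fun=> None); apply: assignment0 => a; move: (d0 a); case: (d a).
have [x [y [xj yj xy]]] : exists x y, [/\ x \in F j, y \in F j & x != y].
  by apply/card_gt1P; have := budF j; lia.
case: (boolP [exists k, (y \in F k) && (k != j)]) => [/existsP[k /andP[yk kj]] | yF].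
  case: (boolP (x \in F k)) => xk.
    exact: (assignment_pair owF budF IH yj kj yk xj xy xk).
  exact: (assignment_split_off owF budF IH yj kj yk xj xy xk).
apply: (assignment_private owF budF IH yj) => a ya; apply/eqP.
by apply: contraNT yF => aj; apply/existsP; exists a; rewrite ya.
Qed.

Lemma exists_disjoint_subsets F d : (forall e, #|owners F e| <= 2) ->
  (forall a, d a * 2 <= #|F a|) ->
  exists T : I -> {set X}, [/\ forall a, T a \subset F a,
    forall a, #|T a| = d a & forall e a b, e \in T a -> e \in T b -> a = b].
Proof.
move=> owF budF; have [f [fF fd]] := assignment_exists owF budF.
pose T a := [set e in take (d a) (enum (fibre f a))].
have mem_T e a : e \in T a -> f e = Some a.
  by rewrite /T inE => /mem_take; rewrite mem_enum !inE => /eqP.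
exists T; split=> [a|a|e a b /mem_T fa /mem_T]; last by rewrite fa => -[].
  by apply/subsetP => e /mem_T/fF.
have /card_uniqP size_T : uniq (take (d a) (enum (fibre f a))).
  by rewrite take_uniq ?enum_uniq.
by rewrite cardsE size_T size_takel // -cardE.
Qed.

End Assignment.

Section Augmentation.
Variables (X : finType) (Sc : {set {set X}}) (T0 : {set X} -> {set X}).
Hypothesis card4 : forall S, S \in Sc -> #|S| = 4.
Hypothesis mult2 : forall e, #|[set S in Sc | e \in S]| <= 2.
Hypothesis T0_sub : forall S, T0 S \subset S.
Hypothesis T0_Sc : forall e S, e \in T0 S -> S \in Sc.
Hypothesis card_T0 : forall S, S \in Sc -> #|T0 S| = 2.
Hypothesis T0_inj : forall e S S', e \in T0 S -> e \in T0 S' -> S = S'.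
Implicit Types (A : {set {set X}}) (g : {set X} -> X).

(* [owner e] defaults to [set0], whose pair is empty (by [T0_sub]), when no pair
   contains [e]; [block e] is then [[set e]]. *)
Definition owner e := odflt set0 [pick S | e \in T0 S].
Definition block e := e |: T0 (owner e).

Lemma owner_T0 e S : e \in T0 S -> owner e = S.
Proof.
rewrite /owner => eS; case: pickP => [S' /T0_inj/(_ eS) //|none].
by rewrite none in eS.
Qed.

Lemma T0_owner a e : a \in T0 (owner e) -> e \in T0 (owner e).
Proof.
rewrite /owner; case: pickP => [S //|_] /=.
by have := T0_sub set0; rewrite subset0 => /eqP->; rewrite inE.
Qed.

Lemma mem_block e : e \in block e.
Proof. exact: setU11. Qed.

Lemma block_sym a e : a \in block e -> e \in block a.
Proof.
case/setU1P => [->|ae]; first exact: mem_block.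
by rewrite /block (owner_T0 ae) !inE (T0_owner ae) orbT.
Qed.

Lemma card_block e : #|block e| <= 2.
Proof.
case: (boolP (e \in T0 (owner e))) => [eT0|eNT0].
  by rewrite /block cardsU1 eT0 card_T0 // (T0_Sc eT0).
rewrite /block cardsU1 eNT0 (_ : T0 (owner e) = set0) ?cards0 //.
by apply/setP => a; rewrite inE; apply: contraNF eNT0 => /T0_owner.
Qed.

(* Each [v \in A] gets the extra point [g v], which may be taken from the pair
   of another set; distinct blocks for the [g v] mean that no pair loses two
   points, and the last condition that the pairs of [A] lose none. *)
Definition augmenting A g :=
  [/\ A \subset Sc, {in A, forall v, g v \in v},
      {in A &, forall v v', g v \in block (g v') -> v = v'}
    & {in A &, forall v v', g v \notin T0 v'}].

Definition augmented A g S := if S \in A then g S |: T0 S else T0 S :\: g @: A.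

Section Augmented.
Variables (A : {set {set X}}) (g : {set X} -> X).
Hypothesis Ag : augmenting A g.

Lemma augmented_sub S : augmented A g S \subset S.
Proof.
have [_ gA _ _] := Ag; rewrite /augmented; case: ifP => SA.
  by rewrite subUset sub1set gA // T0_sub.
exact: subset_trans (subsetDl _ _) (T0_sub S).
Qed.

Lemma card_augmented_in S : S \in A -> #|augmented A g S| = 3.
Proof.
have [ASc _ _ gT0] := Ag => SA.
by rewrite /augmented SA cardsU1 gT0 // card_T0 // (subsetP ASc).
Qed.

Lemma card_augmented_notin S : S \in Sc -> S \notin A -> 0 < #|augmented A g S|.
Proof.
have [_ _ gblock _] := Ag => SSc SA.
have : #|T0 S :&: g @: A| <= 1.
  apply/card_le1_eqP => a b /setIP[aS /imsetP[v vA av]] /setIP[bS /imsetP[v' v'A bv']].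
  rewrite av bv' in aS bS *; congr g; apply: gblock => //.
  by rewrite /block (owner_T0 aS) setU1r.
by rewrite /augmented (negbTE SA) cardsD card_T0 //; lia.
Qed.

Lemma augmentedP e S : e \in augmented A g S -> e \in T0 S \/ S \in A /\ e = g S.
Proof.
rewrite /augmented; case: ifP => SA; last by case/setDP; left.
by case/setU1P; [right | left].
Qed.

Lemma g_augmented S S' : S \in A -> g S \in augmented A g S' -> S' = S.
Proof.
have [_ _ gblock gT0] := Ag => SA; rewrite /augmented; case: ifP => S'A.
  case/setU1P => [gSS'|]; last by rewrite (negbTE (gT0 _ _ SA S'A)).
  by apply: gblock => //; rewrite gSS' mem_block.
by case/setDP => _; rewrite imset_f.
Qed.

Lemma augmented_disjoint S S' :
  S != S' -> [disjoint augmented A g S & augmented A g S'].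
Proof.
move=> SS'; rewrite disjoints_subset; apply/subsetP => e eS; rewrite inE.
apply: contra SS' => eS'; apply/eqP.
case: (augmentedP eS) => [e0S | [SA eg]]; last first.
  by rewrite eg in eS'; rewrite (g_augmented SA eS').
case: (augmentedP eS') => [e0S' | [S'A eg]]; first exact: T0_inj e0S e0S'.
by rewrite eg in eS; rewrite (g_augmented S'A eS).
Qed.

End Augmented.

Definition blocked A g := \bigcup_(v in A) (T0 v :|: block (g v)).

Definition free A g :=
  [set w in Sc | (w \notin A) && [forall v in A, g v \notin T0 w]].

Lemma card_blocked A g : A \subset Sc -> #|blocked A g| <= 4 * #|A|.
Proof.
move=> ASc; apply: leq_trans (leq_card_bigcup _ _) _.
rewrite mulnC -sum_nat_const; apply: leq_sum => v vA.
apply: leq_trans (leq_card_setU _ _) _.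
by rewrite card_T0 ?(subsetP ASc) // -[4]/(2 + 2) leq_add2l card_block.
Qed.

Lemma card_Sc_free A g : #|Sc| <= 2 * #|A| + #|free A g|.
Proof.
have sub : Sc \subset A :|: [set owner (g v) | v in A] :|: free A g.
  apply/subsetP => S SSc; rewrite !inE SSc /=.
  case: (boolP (S \in A)) => //= SA.
  case: (boolP [forall v in A, g v \notin T0 S]) => [hS | /forall_inPn[v vA]].
    by apply/orP; right.
  by rewrite negbK orbF => /owner_T0 <-; apply/imsetP; exists v.
apply: leq_trans (subset_leq_card sub) _; apply: leq_trans (leq_card_setU _ _) _.
rewrite mul2n -addnn leq_add2r; apply: leq_trans (leq_card_setU _ _) _.
by rewrite leq_add2l leq_imset_card.
Qed.

Lemma blocked_not_free A g y : augmenting A g -> y \in blocked A g ->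
  exists2 z, z \in Sc & (y \in z) && (z \notin free A g).
Proof.
case=> ASc gA _ _ /bigcupP[v vA].
have vNfree : v \notin free A g by rewrite !inE vA andbF.
case/setUP => [yv | /setU1P[-> | yu]].
- by exists v; rewrite ?(subsetP ASc) // (subsetP (T0_sub v)).
- by exists v; rewrite ?(subsetP ASc) // gA.
exists (owner (g v)); first exact: T0_Sc yu.
rewrite (subsetP (T0_sub _)) //= !inE negb_and orbC; apply/orP; left.
by rewrite negb_and orbC negb_forall_in; apply/orP; left; apply/existsP; exists v;
  rewrite vA (T0_owner yu).
Qed.

(* A blocked point lies in a non-free set, so by [mult2] in at most one free
   set: the blocked points outside the pairs of distinct free sets are disjoint. *)
Lemma free_unblocked A g : augmenting A g -> 4 * #|A| < #|Sc| ->
  exists2 w, w \in free A g & exists2 y, y \in w :\: T0 w & y \notin blocked A g.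
Proof.
move=> Ag ltA; have [ASc _ _ _] := Ag.
set B := blocked A g; set Fr := free A g.
have disj : {in Fr &, forall w1 w2, w1 != w2 ->
    [disjoint (w1 :\: T0 w1) :&: B & (w2 :\: T0 w2) :&: B]}.
  move=> w1 w2 w1F w2F w12; rewrite -setI_eq0; apply/eqP/setP => y; rewrite !inE.
  apply/negP => /and3P[/andP[/andP[_ yw1] yB] /andP[_ yw2] _].
  have [z zSc /andP[yz zNF]] := blocked_not_free Ag yB.
  have zw : (z == w1) || (z == w2).
    case/setIdP: (w1F) => w1Sc _; case/setIdP: (w2F) => w2Sc _.
    by apply: (mem_card_le2 (mult2 y) w12); rewrite inE ?w1Sc ?w2Sc ?zSc.
  by case/orP: zw => /eqP zw; move: zNF; rewrite zw ?w1F ?w2F.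
have sumB := sum_card_disjoint disj (fun w _ => subsetIr _ B).
have [w wF /subsetPn[y yw yB]] : exists2 w, w \in Fr & ~~ (w :\: T0 w \subset B).
  apply/exists_inP; rewrite -negb_forall_in; apply/negP => /forall_inP allB.
  move: sumB; rewrite (eq_bigr (fun=> 2)) => [|w wF]; last first.
    rewrite (setIidPl (allB w wF)); case/setIdP: wF => wSc _.
    by rewrite cardsD (setIidPr (T0_sub w)) card4 ?card_T0.
  rewrite sum_nat_const; have := card_blocked g ASc; have := card_Sc_free A g.
  by rewrite -/B -/Fr; lia.
by exists w => //; exists y.
Qed.

Lemma augmenting_extend A g w y : augmenting A g -> w \in free A g ->
  y \in w :\: T0 w -> y \notin blocked A g ->
  augmenting (w |: A) [eta g with w |-> y].
Proof.
case=> ASc gA gblock gT0 /setIdP[wSc /andP[wA /forall_inP gNT0w]] /setDP[yw yNT0w].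
move=> yNB; have yNv v : v \in A -> (y \notin T0 v) && (y \notin block (g v)).
  move=> vA; rewrite -negb_or; apply: contra yNB => yv.
  by apply/bigcupP; exists v; last by rewrite in_setU.
have vw v : v \in A -> (v == w) = false by move=> vA; apply: contraNF wA => /eqP <-.
split.
- by rewrite subUset sub1set wSc.
- by move=> v /setU1P[-> | vA] /=; rewrite ?eqxx ?vw ?gA.
- move=> v v' /setU1P[-> | vA] /setU1P[-> | v'A] /=; rewrite ?eqxx ?vw //.
  + by case/andP: (yNv _ v'A) => _ /negPf->.
  + by move/block_sym; case/andP: (yNv _ vA) => _ /negPf->.
  + exact: gblock.
- move=> v v' /setU1P[-> | vA] /setU1P[-> | v'A] /=; rewrite ?eqxx ?vw //.
  + by case/andP: (yNv _ v'A).
  + exact: gNT0w.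
  + exact: gT0.
Qed.

Lemma augmenting0 x0 : augmenting set0 (fun=> x0).
Proof. by split=> [|v|v v'|v v']; rewrite ?sub0set ?inE. Qed.

Lemma exists_augmenting_large A g : augmenting A g ->
  exists A' g', augmenting A' g' /\ #|Sc| <= 4 * #|A'|.
Proof.
have [n] := ubnP (#|Sc| - #|A|); elim: n => // n IH in A g *.
rewrite ltnS => leA Ag; case: (leqP #|Sc| (4 * #|A|)) => [le4 | lt4].
  by exists A, g.
have [w wF [y yw yNB]] := free_unblocked Ag lt4.
apply: (IH _ _ _ (augmenting_extend Ag wF yw yNB)).
by case/setIdP: wF => _ /andP[wA _]; rewrite cardsU1 wA; lia.
Qed.

Lemma exists_disjoint_quarter_triples :
  exists T : {set X} -> {set X},
    [/\ (forall S, S \in Sc -> T S \subset S),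
        (forall S, S \in Sc -> 1 <= #|T S|),
        (forall S S', S \in Sc -> S' \in Sc -> S != S' -> [disjoint T S & T S']) &
        #|Sc| <= 4 * #|[set S in Sc | #|T S| == 3]| ].
Proof.
case: (set_0Vmem Sc) => [-> | [S0 S0Sc]].
  by exists id; split=> [S|S|S S'|]; rewrite ?inE ?cards0.
have [x0 _] : exists x0, x0 \in S0 by apply/card_gt0P; rewrite card4.
have [A [g [Ag leA]]] := exists_augmenting_large (augmenting0 x0).
have [ASc _ _ _] := Ag.
exists (augmented A g); split=> [S _ | S SSc | S S' _ _ | ].
- exact: augmented_sub.
- case: (boolP (S \in A)) => SA; first by rewrite card_augmented_in.
  exact: card_augmented_notin.
- exact: augmented_disjoint.
apply: leq_trans leA _; rewrite leq_mul2l; apply/orP; right.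
apply/subset_leq_card/subsetP => S SA.
by rewrite inE (subsetP ASc) //= card_augmented_in.
Qed.

End Augmentation.

Unset Implicit Arguments.
Set Strict Implicit.

Theorem lemma11p5 (K : nat) (Sc : {set {set 'I_K}})
  (h4 : forall S, S \in Sc -> #|S| = 4)
  (h2 : forall j : 'I_K, #|[set S in Sc | j \in S]| <= 2) :
  exists T : {set 'I_K} -> {set 'I_K},
    [/\ (forall S, S \in Sc -> T S \subset S),
        (forall S, S \in Sc -> 1 <= #|T S|),
        (forall S S', S \in Sc -> S' \in Sc -> S != S' -> [disjoint T S & T S']) &
        #|Sc| <= 4 * #|[set S in Sc | #|T S| == 3]| ].
Proof.
pose F S := if S \in Sc then S else set0.
pose d S := if S \in Sc then 2 else 0.
have owF e : #|owners F e| <= 2.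
  rewrite (_ : owners F e = [set S in Sc | e \in S]) ?h2 //.
  by apply/setP => S; rewrite !inE /F; case: (S \in Sc); rewrite ?inE.
have budF S : d S * 2 <= #|F S| by rewrite /d /F; case: ifP => // /h4->.
have [T0 [T0F cardT0 T0inj]] := exists_disjoint_subsets owF budF.
have T0_Sc e S : e \in T0 S -> S \in Sc.
  by move/(subsetP (T0F S)); rewrite /F; case: ifP; rewrite ?inE.
apply: (exists_disjoint_quarter_triples h4 h2 (T0 := T0) _ T0_Sc _ T0inj).
- move=> S; apply: subset_trans (T0F S) _.
  by rewrite /F; case: ifP; rewrite ?sub0set.
- by move=> S SSc; rewrite cardT0 /d SSc.
Qed.
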